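(* Let $G$ be a real $n\times m$ matrix and $\mathbf v\in\mathbb R^n$, and let $\mathcal G=\{x\in\mathbb R^m: Gx\le \mathbf v\}$ (componentwise). Let $P$ be the nonnegative orthant of $\mathbb R^n$ and $F=\mathcal R(G)$. Let $\upsilon$ be the orthogonal projection of $\mathbf v$ onto $F^\perp$. Assume $\upsilon\ne0$ and $F\cap P=\{0\}$. Let $F_e=\mathrm{span}(\upsilon)+F$, and for $y\in F_e$ let $\beta(y)\in\mathbb R$ be the unique scalar such that $y-\beta(y)\upsilon\in F$. Then exactly one of the following three cases occurs. (a) $F_e\cap P=\{0\}$. In this case $\mathcal G=\emptyset$. (b) $F_e\cap P\neq\{0\}$ and $\beta(y)<0$ for every nonzero $y\in F_e\cap P$. In this case $\mathcal G=\emptyset$. (c) $F_e\cap P\neq\{0\}$ and $\beta(y)>0$ for every nonzero $y\in F_e\cap P$. In this case $\mathcal G\neq\emptyset$. *)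

From mathcomp Require Import all_boot all_order all_algebra.
From mathcomp Require Import reals.
Set Implicit Arguments. Unset Strict Implicit. Unset Printing Implicit Defensive.
Import Order.TTheory GRing.Theory Num.Theory.
Local Open Scope ring_scope.

Section Defs.
Variables (R : realType) (n m : nat).
Implicit Types (G : 'M[R]_(n, m)) (y u v : 'cV[R]_n).

Definition in_orthant y : Prop := forall i : 'I_n, 0 <= y i ord0.

Definition in_range G y : Prop := exists x : 'cV[R]_m, y = G *m x.

Definition in_range_perp G y : Prop := G^T *m y = 0.

Definition is_proj_range_perp G v u : Prop :=
  in_range_perp G u /\ in_range G (v - u).

Definition is_beta G u y (b : R) : Prop := in_range G (y - b *: u).

Definition in_Fe G u y : Prop := exists b : R, is_beta G u y b.

Definition in_polyhedron G v (x : 'cV[R]_m) : Prop :=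
  forall i : 'I_n, (G *m x) i ord0 <= v i ord0.

End Defs.

From Stdlib Require Classical_Prop.
From mathcomp Require Import all_boot all_order all_algebra.
From mathcomp Require Import reals.
Import Order.TTheory GRing.Theory Num.Theory.
Local Open Scope ring_scope.

(* A point x of the polyhedron gives the slack s := v - G x, which is
   nonnegative and satisfies s - u = (v - u) - G x in F, i.e. beta(s) = 1.
   Conversely, a nonnegative y in F_e with beta(y) = b > 0 yields the point
   x0 - x/b, where v - u = G x0 and y - b u = G x.  The trichotomy rests on
   two facts coming from F /\ P = {0}: a nonzero y in F_e /\ P has
   beta(y) <> 0, and two such vectors cannot have betas of opposite signs,
   since otherwise a positive combination of them would lie in F /\ P. *)

Section Range.
Set Implicit Arguments. Unset Strict Implicit.
Variables (R : realType) (n m : nat) (G : 'M[R]_(n, m)).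
Implicit Types (y z u v : 'cV[R]_n) (a b : R).

Lemma in_rangeZ a y : in_range G y -> in_range G (a *: y).
Proof. by move=> [x ->]; exists (a *: x); rewrite scalemxAr. Qed.

Lemma in_rangeD y z : in_range G y -> in_range G z -> in_range G (y + z).
Proof. by move=> [x ->] [x' ->]; exists (x + x'); rewrite mulmxDr. Qed.

Lemma in_rangeN y : in_range G y -> in_range G (- y).
Proof. by move=> [x ->]; exists (- x); rewrite mulmxN. Qed.

Lemma in_range_perp_eq0 y : in_range G y -> in_range_perp G y -> y = 0.
Proof.
move=> [x ->] Gperp.
have GxTGx0 : ((G *m x)^T *m (G *m x)) ord0 ord0 = 0.
  by rewrite trmx_mul -mulmxA Gperp mulmx0 mxE.
move: GxTGx0; rewrite mxE => /eqP; rewrite psumr_eq0 => [/allP sqr_eq0|i _]; last first.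
  by rewrite !mxE -expr2 sqr_ge0.
apply/matrixP => i j; rewrite ord1 [RHS]mxE.
by have := sqr_eq0 i (mem_index_enum _); rewrite !mxE mulf_eq0 orbb => /eqP.
Qed.

Lemma in_polyhedron_of_beta_gt0 u v y b : in_range G (v - u) ->
  in_orthant y -> is_beta G u y b -> 0 < b -> exists x, in_polyhedron G v x.
Proof.
move=> [x0 Ex0] y_ge0 [x Ex] b_gt0; exists (x0 - b^-1 *: x).
have Gx_eq : G *m (x0 - b^-1 *: x) = v - b^-1 *: y.
  rewrite mulmxBr -scalemxAr -Ex -Ex0 scalerBr scalerA mulVf ?gt_eqF // scale1r.
  by rewrite opprB addrA subrK.
by move=> i; rewrite Gx_eq !mxE gerBl mulr_ge0 // invr_ge0 ltW.
Qed.

Variable u : 'cV[R]_n.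
Hypotheses (u_perp : in_range_perp G u) (u_neq0 : u != 0).

Lemma is_beta_neq0 y b : is_beta G u y b -> b != 0 -> y != 0.
Proof.
move=> yb b_neq0; apply: contra u_neq0 => /eqP y0.
move: yb; rewrite /is_beta y0 sub0r -scaleNr => /(in_rangeZ (- b)^-1).
rewrite scalerA mulVf ?oppr_eq0 // scale1r => u_in_range.
by apply/eqP/in_range_perp_eq0.
Qed.

Lemma in_polyhedron_slack v x : in_range G (v - u) -> in_polyhedron G v x ->
  [/\ in_orthant (v - G *m x), v - G *m x != 0 & is_beta G u (v - G *m x) 1].
Proof.
move=> [x0 Ex0] Gx_le_v.
have slack_beta : is_beta G u (v - G *m x) 1.
  by exists (x0 - x); rewrite scale1r mulmxBr -Ex0 addrAC.
split=> //; last by apply: is_beta_neq0 slack_beta _; rewrite oner_eq0.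
by move=> i; have := Gx_le_v i; rewrite !mxE subr_ge0.
Qed.

Hypothesis pointed : forall y, in_range G y -> in_orthant y -> y = 0.

Lemma orthant_beta_neq0 y b : in_orthant y -> y != 0 -> is_beta G u y b -> b != 0.
Proof.
move=> y_ge0 y_neq0 yb; apply: contra y_neq0 => /eqP b0.
by move: yb; rewrite /is_beta b0 scale0r subr0 => /pointed /(_ y_ge0) ->.
Qed.

Lemma orthant_betas_not_opposite y1 b1 y2 b2 :
  in_orthant y1 -> y1 != 0 -> is_beta G u y1 b1 ->
  in_orthant y2 -> is_beta G u y2 b2 -> b1 < 0 -> 0 < b2 -> False.
Proof.
move=> y1_ge0 y1_neq0 y1b1 y2_ge0 y2b2 b1_lt0 b2_gt0.
set y := b2 *: y1 - b1 *: y2.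
have y_in_range : in_range G y.
  have -> : y = b2 *: (y1 - b1 *: u) - b1 *: (y2 - b2 *: u).
    by rewrite /y !scalerBr !scalerA [b1 * b2]mulrC opprB addrA subrK.
  by apply/in_rangeD/in_rangeN; apply: in_rangeZ.
have terms_ge0 i : 0 <= b2 * y1 i ord0 /\ 0 <= - (b1 * y2 i ord0).
  by rewrite -mulNr; split; apply: mulr_ge0;
    rewrite ?oppr_ge0 ?(ltW b1_lt0) ?(ltW b2_gt0) ?y1_ge0 ?y2_ge0.
have y_ge0 : in_orthant y.
  by move=> i; have [? ?] := terms_ge0 i; rewrite !mxE addr_ge0.
have y0 := pointed y_in_range y_ge0.
apply/(negP y1_neq0)/eqP/matrixP => i j; rewrite ord1 [RHS]mxE.
have [? ?] := terms_ge0 i.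
have /eqP : y i ord0 = 0 by rewrite y0 mxE.
rewrite /y !mxE paddr_eq0 // => /andP[].
by rewrite mulf_eq0 (gt_eqF b2_gt0) => /eqP.
Qed.

Lemma Fe_orthant_trichotomy :
  let nontrivial := exists y, [/\ in_Fe G u y, in_orthant y & y != 0] in
  (forall y, in_Fe G u y -> in_orthant y -> y = 0) \/
  (nontrivial /\ forall y b, in_orthant y -> y != 0 -> is_beta G u y b -> b < 0) \/
  (nontrivial /\ forall y b, in_orthant y -> y != 0 -> is_beta G u y b -> 0 < b).
Proof.
move=> nontrivial; have [nontriv|trivial] := Classical_Prop.classic nontrivial; last first.
  left=> y y_Fe y_ge0; apply: Classical_Prop.NNPP => /eqP y_neq0.
  by apply: trivial; exists y.
right; case: (nontriv) => y1 [[b1 y1b1] y1_ge0 y1_neq0].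
have betaP y b : in_orthant y -> y != 0 -> is_beta G u y b -> b < 0 \/ 0 < b.
  by move=> y_ge0 y_neq0 yb; apply/orP; rewrite -neq_lt (orthant_beta_neq0 y_ge0 y_neq0 yb).
have [b1_lt0|b1_gt0] := betaP _ _ y1_ge0 y1_neq0 y1b1.
- left; split=> // y b y_ge0 y_neq0 yb.
  have [//|b_gt0] := betaP _ _ y_ge0 y_neq0 yb.
  by case: (orthant_betas_not_opposite y1_ge0 y1_neq0 y1b1 y_ge0 yb b1_lt0 b_gt0).
- right; split=> // y b y_ge0 y_neq0 yb.
  have [b_lt0|//] := betaP _ _ y_ge0 y_neq0 yb.
  by case: (orthant_betas_not_opposite y_ge0 y_neq0 yb y1_ge0 y1b1 b_lt0 b1_gt0).
Qed.

End Range.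

Theorem mainTheorem4 (R : realType) (n m : nat) (G : 'M[R]_(n, m))
  (v upsilon : 'cV[R]_n) :
  is_proj_range_perp G v upsilon ->
  upsilon != 0 ->
  (forall y, in_range G y -> in_orthant y -> y = 0) ->
  let caseA := forall y, in_Fe G upsilon y -> in_orthant y -> y = 0 in
  let caseB := (exists y, [/\ in_Fe G upsilon y, in_orthant y & y != 0]) /\
               (forall y b, in_orthant y -> y != 0 -> is_beta G upsilon y b -> b < 0) in
  let caseC := (exists y, [/\ in_Fe G upsilon y, in_orthant y & y != 0]) /\
               (forall y b, in_orthant y -> y != 0 -> is_beta G upsilon y b -> 0 < b) in
  let Gempty := forall x : 'cV[R]_m, ~ in_polyhedron G v x in
  ((caseA \/ caseB \/ caseC) /\
   ~ (caseA /\ caseB) /\ ~ (caseA /\ caseC) /\ ~ (caseB /\ caseC)) /\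
  (caseA -> Gempty) /\
  (caseB -> Gempty) /\
  (caseC -> exists x : 'cV[R]_m, in_polyhedron G v x).
Proof.
move=> [u_perp v_u_range] u_neq0 pointed caseA caseB caseC Gempty.
split; [split; [exact: Fe_orthant_trichotomy|split; [|split]]|split; [|split]].
- by move=> [A [[y [y_Fe y_ge0 y_neq0]] _]]; rewrite (A y y_Fe y_ge0) eqxx in y_neq0.
- by move=> [A [[y [y_Fe y_ge0 y_neq0]] _]]; rewrite (A y y_Fe y_ge0) eqxx in y_neq0.
- move=> [[[y [[b yb] y_ge0 y_neq0]] B] [_ C]].
  by have := lt_trans (C _ _ y_ge0 y_neq0 yb) (B _ _ y_ge0 y_neq0 yb); rewrite ltxx.
- move=> A x /(in_polyhedron_slack u_perp u_neq0 v_u_range).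
  move=> [slack_ge0 slack_neq0 slack_beta].
  by move/eqP: slack_neq0; apply; apply: A slack_ge0; exists 1.
- move=> [_ B] x /(in_polyhedron_slack u_perp u_neq0 v_u_range).
  move=> [slack_ge0 slack_neq0 slack_beta].
  by have := B _ _ slack_ge0 slack_neq0 slack_beta; rewrite ltr10.
- move=> [[y [[b yb] y_ge0 y_neq0]] C].
  exact: in_polyhedron_of_beta_gt0 v_u_range y_ge0 yb (C _ _ y_ge0 y_neq0 yb).
Qed.
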